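(* Let $G=(V,E)$ be a finite simple undirected graph and let $k\ge 0$ be an integer. For each pair of adjacent nodes $r,r'$ of $G$, there exists a maximal $k$-robust partitioning of $G$ in which $r$ and $r'$ lie in the same part.
   Context: A finite simple undirected graph $H$ is $k$-robust if, after removing arbitrary $k$ nodes and their incident edges, the remaining graph is still connected; a clique or a single node is $k$-robust for every $k$. A set $S\subseteq V$ is $k$-robust if the induced subgraph $G[S]$ is $k$-robust. A maximal $k$-robust partitioning of $G$ is a partition of $V$ into nonempty parts such that (1) each node belongs to exactly one part, (2) each part is $k$-robust, and (3) the union of any two or more parts is not $k$-robust. *)

(* A finite simple undirected graph on a finType T is given by
   a symmetric irreflexive relation e : rel T. *)
From mathcomp Require Import all_boot.
Set Implicit Arguments. Unset Strict Implicit. Unset Printing Implicit Defensive.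

Section Robust.
Variables (T : finType) (e : rel T).

Definition induced_rel (A : {set T}) : rel T :=
  [rel x y | [&& e x y, x \in A & y \in A]].

(* G[A] is connected (the empty graph counts as connected) *)
Definition induced_connected (A : {set T}) : Prop :=
  forall x y, x \in A -> y \in A -> connect (induced_rel A) x y.

Definition is_clique (S : {set T}) : Prop :=
  forall x y, x \in S -> y \in S -> x != y -> e x y.

Definition k_robust (k : nat) (S : {set T}) : Prop :=
  is_clique S \/
  (forall R : {set T}, #|R| <= k -> induced_connected (S :\: R)).

Definition max_robust_partition (k : nat) (P : {set {set T}}) : Prop :=
  [/\ partition P [set: T],
      (forall A, A \in P -> k_robust k A) &
      (forall Q : {set {set T}}, Q \subset P -> 2 <= #|Q| ->
          ~ k_robust k (cover Q))].

End Robust.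

(* Start from the partition whose only non-singleton block is the edge {r, r'};
   all its blocks are cliques, hence k-robust.  As long as some union of at
   least two blocks is k-robust, merge those blocks: the result is again a
   partition into k-robust blocks, with fewer blocks, each old block lying
   inside a new one.  The process stops at a maximal k-robust partitioning,
   and the block containing {r, r'} survives inside one of its parts. *)
From Stdlib Require Import Classical.
From mathcomp Require Import all_boot zify.
Set Implicit Arguments. Unset Strict Implicit.

Definition refines (T : finType) (P P' : {set {set T}}) :=
  forall A, A \in P -> exists2 B, B \in P' & A \subset B.

Lemma refines_trans (T : finType) (P P' P'' : {set {set T}}) :
  refines P P' -> refines P' P'' -> refines P P''.
Proof.
move=> h h' A /h [B /h' [C CP'' sBC] sAB].
by exists C; last exact: subset_trans sBC.
Qed.

Section Merge.
Variables (T : finType) (P Q : {set {set T}}).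

Lemma refines_merge : refines P (cover Q |: (P :\: Q)).
Proof.
move=> A AP; case AQ: (A \in Q).
- by exists (cover Q); [exact: setU11 | exact: bigcup_sup].
- by exists A; rewrite // !inE AQ AP orbT.
Qed.

Hypothesis sQP : Q \subset P.

Lemma partition_merge (D : {set T}) :
  partition P D -> Q != set0 -> partition (cover Q |: (P :\: Q)) D.
Proof.
move=> partP Qn0; have tiP := partition_trivIset partP.
have ->: D = cover Q :|: cover (P :\: Q).
  by rewrite -bigcup_setU -{1}(setIidPr sQP) setID; exact/esym/cover_partition.
apply: partitionU1.
- by rewrite /partition eqxx trivIsetD //= inE (partition0 partP) andbF.
- have [A AQ] := set0Pn _ Qn0.
  have [x xA] := set0Pn _ (partition_neq0 partP (subsetP sQP _ AQ)).
  by apply/set0Pn; exists x; apply/bigcupP; exists A.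
- apply/bigcup_disjointP => B /setDP [BP BQ].
  rewrite disjoint_sym; apply/bigcup_disjointP => A AQ.
  apply: (trivIsetP tiP B A BP (subsetP sQP _ AQ)).
  by apply: contraNneq BQ => ->.
Qed.

Lemma card_merge_lt : 2 <= #|Q| -> #|cover Q |: (P :\: Q)| < #|P|.
Proof.
move=> Q2; have := subset_leq_card sQP; move: Q2.
(* the cardinals occur under two convertible but syntactically different
   finType instances, which lia would treat as distinct atoms *)
by rewrite cardsU1 cardsDS //; case: (_ \notin _); move: #|P| #|Q| => p q; lia.
Qed.

End Merge.

Section Robust.
Variables (T : finType) (e : rel T) (k : nat).

Lemma max_robust_partition_coarsening (P : {set {set T}}) :
  partition P [set: T] -> (forall A, A \in P -> k_robust e k A) ->
  exists2 P', max_robust_partition e k P' & refines P P'.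
Proof.
move: {2}#|P|.+1 (ltnSn #|P|) => n; elim: n P => [//|n IH] P Pn partP robP.
have [[Q [sQP Q2 robQ]] | noQ] := classic (exists Q : {set {set T}},
   [/\ Q \subset P, 2 <= #|Q| & k_robust e k (cover Q)]); last first.
  exists P => [|A AP]; last by exists A.
  by split=> // Q sQP Q2 robQ; apply: noQ; exists Q.
have Qn0 : Q != set0 by rewrite -card_gt0; case: #|Q| Q2.
have [|||P' maxP' refP'] := IH (cover Q |: (P :\: Q)).
- by rewrite -ltnS; apply: leq_trans (card_merge_lt sQP Q2) _.
- exact: partition_merge.
- by move=> A /setU1P [-> // | /setDP [AP _]]; exact: robP.
by exists P'; last exact: refines_trans (@refines_merge _ P Q) refP'.
Qed.

Lemma preim_partition_clique (rT : eqType) (f : T -> rT) (D : {set T}) :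
  (forall y z, f y = f z -> y != z -> e y z) ->
  forall A, A \in preim_partition f D -> is_clique e A.
Proof.
move=> fe _ /imsetP [x _ ->] y z.
rewrite !inE => /andP [_ /eqP fxy] /andP [_ /eqP fxz].
by apply: fe; rewrite -fxy -fxz.
Qed.

End Robust.

Theorem lemma2 (T : finType) (e : rel T)
  (e_sym : symmetric e) (e_irr : irreflexive e) (k : nat) (r r' : T) :
  e r r' ->
  exists P : {set {set T}},
    max_robust_partition e k P /\
    exists2 A, A \in P & (r \in A) && (r' \in A).
Proof.
move=> err'.
pose glue x := if x == r' then r else x.
have glue_edge y z : glue y = glue z -> y != z -> e y z.
  rewrite /glue; case: eqP => [-> | _]; case: eqP => [-> | _].
  - by rewrite eqxx.
  - by move=> <- _; rewrite e_sym.
  - by move=> -> _.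
  - by move=> ->; rewrite eqxx.
pose P0 := preim_partition glue [set: T].
have [||P maxP refP] := max_robust_partition_coarsening (e := e) (k := k) (P := P0).
- exact: preim_partitionP.
- by move=> A /(preim_partition_clique glue_edge) robA; left.
have [A AP sA] := refP _ (imset_f _ (in_setT r)).
exists P; split=> //; exists A => //.
by rewrite !(subsetP sA) // !inE /glue if_same !eqxx.
Qed.
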